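(* Let $Y_1,\ldots,Y_n\in L_2(\mathcal{I})$ and let $p$ be an integer with $1\le p<n$. Let $\hat K$ be the operator and $K^*$ the $(n-p)\times(n-p)$ matrix defined in the context. Then $\hat K$ and $K^*$ have the same nonzero eigenvalues. Moreover, if $\hat\theta\neq0$ is an eigenvalue of $K^*$ with eigenvector $\gamma=(\gamma_1,\ldots,\gamma_{n-p})'$, then the function $\hat\psi(\cdot)=\sum_{t=1}^{n-p}\gamma_t\{Y_t(\cdot)-\bar Y(\cdot)\}$ satisfies $\hat K\hat\psi=\hat\theta\,\hat\psi$, i.e. it is an eigenfunction of $\hat K$ for the eigenvalue $\hat\theta$.
   Context: $\mathcal{I}$ is a compact interval, $L_2(\mathcal{I})$ has inner product $\langle f,g\rangle=\int_{\mathcal{I}}fg$, and a kernel $L(u,v)$ acts as the integral operator $(Lg)(u)=\int_{\mathcal{I}}L(u,v)g(v)\,dv$. Put $\bar Y=n^{-1}\sum_{j=1}^nY_j$, and for $k=1,\ldots,p$, $\hat M_k(u,v)=\frac{1}{n-p}\sum_{j=1}^{n-p}\{Y_j(u)-\bar Y(u)\}\{Y_{j+k}(v)-\bar Y(v)\}$ and $\hat K(u,v)=\sum_{k=1}^p\int_{\mathcal{I}}\hat M_k(u,z)\hat M_k(v,z)\,dz$. For $k=0,1,\ldots,p$ let $G_k$ be the $(n-p)\times(n-p)$ matrix with $(t,s)$ entry $\langle Y_{t+k}-\bar Y,\,Y_{s+k}-\bar Y\rangle$, and define $K^*=(n-p)^{-2}\sum_{k=1}^pG_kG_0$. *)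

From HB Require Import structures.
From mathcomp Require Import all_boot all_order all_algebra.
From mathcomp Require Import all_classical all_reals all_analysis.
Unset Printing Implicit Defensive.
Import Order.TTheory GRing.Theory Num.Theory.
Local Open Scope classical_set_scope.
Local Open Scope ring_scope.

Section Defs.
Variable R : realType.
Notation mu := (@lebesgue_measure R).

Definition inL2 (a b : R) (f : R -> R) : Prop :=
  measurable_fun `[a, b] f /\
  (\int[mu]_(x in `[a, b]) ((f x) ^+ 2)%:E < +oo)%E.

(* f represents the zero element of L_2([a,b]) *)
Definition L2zero (a b : R) (f : R -> R) : Prop :=
  {ae mu, forall x, x \in `[a, b] -> f x = 0}.

Definition ip (a b : R) (f g : R -> R) : R :=
  fine (\int[mu]_(x in `[a, b]) (f x * g x)%:E).

(* Ybar = n^-1 \sum_{j=1}^n Y_j   (Y indexed by 1..n) *)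
Definition Ybar (n : nat) (Y : nat -> R -> R) (u : R) : R :=
  n%:R^-1 * \sum_(1 <= j < n.+1) Y j u.

Definition Yc (n : nat) (Y : nat -> R -> R) (j : nat) (u : R) : R :=
  Y j u - Ybar n Y u.

Definition Mhat (n p : nat) (Y : nat -> R -> R) (k : nat) (u v : R) : R :=
  (n - p)%:R^-1 * \sum_(1 <= j < (n - p).+1) Yc n Y j u * Yc n Y (j + k) v.

Definition Khat (a b : R) (n p : nat) (Y : nat -> R -> R) (u v : R) : R :=
  \sum_(1 <= k < p.+1) ip a b (Mhat n p Y k u) (Mhat n p Y k v).

Definition Kop (a b : R) (n p : nat) (Y : nat -> R -> R) (g : R -> R) (u : R) : R :=
  ip a b (Khat a b n p Y u) g.

Definition Kop_eigenvalue (a b : R) (n p : nat) (Y : nat -> R -> R) (theta : R) : Prop :=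
  exists g : R -> R, inL2 a b g /\ ~ L2zero a b g /\
    {ae mu, forall u, u \in `[a, b] -> Kop a b n p Y g u = theta * g u}.

(* G_k, (t,s) entry <Y_{t+k} - Ybar, Y_{s+k} - Ybar>, t,s = 1..n-p
   (ordinal t : 'I_(n-p) stands for index t+1) *)
Definition Gmx (a b : R) (n p : nat) (Y : nat -> R -> R) (k : nat) : 'M[R]_(n - p) :=
  \matrix_(t < n - p, s < n - p) ip a b (Yc n Y (t.+1 + k)) (Yc n Y (s.+1 + k)).

Definition Kstar (a b : R) (n p : nat) (Y : nat -> R -> R) : 'M[R]_(n - p) :=
  ((n - p)%:R ^- 2) *: \sum_(1 <= k < p.+1) (Gmx a b n p Y k *m Gmx a b n p Y 0).

Definition psihat (n p : nat) (Y : nat -> R -> R) (gamma : 'cV[R]_(n - p)) (u : R) : R :=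
  \sum_(t < n - p) gamma t 0 * Yc n Y t.+1 u.

End Defs.

Arguments inL2 {R}. Arguments L2zero {R}. Arguments ip {R}. Arguments Ybar {R}.
Arguments Yc {R}. Arguments Mhat {R}. Arguments Khat {R}. Arguments Kop {R}.
Arguments Kop_eigenvalue {R}. Arguments Gmx {R}. Arguments Kstar {R}.
Arguments psihat {R}.

(** Write [e_t = Y_t - Ybar] for [t = 1..n-p], [Ycrow u = (e_t(u))_t] and
    [Ycip g = (<e_t, g>)_t].  Each [Mhat_k(u, .)] is a combination of the
    [e_{t+k}] with coefficients [e_t(u)/(n-p)], so the kernel has finite rank:
    [(Khat g)(u) = Ycrow u * Kcoef * Ycip g] with [Kcoef = (n-p)^-2 \sum_k G_k].
    Moreover [Ycip (psihat gamma) = G_0 gamma] and [K^* = Kcoef G_0].  Hence an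
    eigenfunction [g] for [theta != 0] is a.e. equal to [psihat gamma] with
    [gamma = theta^-1 Kcoef (Ycip g)], an eigenvector of [K^*], and conversely
    [psihat gamma] is an eigenfunction for every eigenvector [gamma]. *)
From HB Require Import structures.
From mathcomp Require Import all_boot all_order all_algebra.
From mathcomp Require Import all_classical all_reals all_analysis.
From mathcomp Require Import measurable_realfun ring lra zify.
Import Order.TTheory GRing.Theory Num.Theory.
Local Open Scope classical_set_scope.
Local Open Scope ring_scope.

Lemma char_poly_trmx (R : comNzRingType) n (A : 'M[R]_n) :
  char_poly A^T = char_poly A.
Proof.
by rewrite /char_poly /char_poly_mx -map_trmx -[X in X - _]tr_scalar_mx -linearB det_tr.
Qed.

Lemma eigenvalue_trmx (F : fieldType) n (A : 'M[F]_n) t :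
  eigenvalue A^T t = eigenvalue A t.
Proof. by rewrite !eigenvalue_root_char char_poly_trmx. Qed.

Lemma eigenvalue_colP (F : fieldType) n (A : 'M[F]_n) t :
  reflect (exists2 v : 'cV_n, A *m v = t *: v & v != 0) (eigenvalue A t).
Proof.
rewrite -eigenvalue_trmx; apply: (iffP eigenvalueP) => -[v vA v0];
  exists v^T; rewrite ?trmx_eq0 //.
- by rewrite -[A]trmxK -trmx_mul vA linearZ.
- by rewrite -trmx_mul vA linearZ.
Qed.

Section L2.
Context {R : realType} {a b : R}.
Local Notation mu := (@lebesgue_measure R).
Local Notation I := (`[a, b]%classic : set R).
Local Notation L2 := (inL2 a b).
Implicit Types f g h : R -> R.

Let mI : measurable I := measurable_itv `[a, b].

Lemma inL2_sqr_integrable {f} : L2 f ->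
  mu.-integrable I (EFin \o (fun x => f x ^+ 2)).
Proof.
case=> mf fin; apply/integrableP; split.
  by apply/measurable_EFinP; exact: measurable_funM.
by under eq_integral => x _ do rewrite /comp abse_EFin ger0_norm ?sqr_ge0 //.
Qed.

Lemma sqr_integrable_inL2 f : measurable_fun I f ->
  mu.-integrable I (EFin \o (fun x => f x ^+ 2)) -> L2 f.
Proof.
move=> mf /integrableP[_ fin]; split=> //.
by move: fin; under eq_integral => x _ do rewrite /comp abse_EFin ger0_norm ?sqr_ge0 //.
Qed.

Lemma inL2_mul_integrable f g : L2 f -> L2 g ->
  mu.-integrable I (EFin \o (fun x => f x * g x)).
Proof.
move=> Lf Lg; have dom : mu.-integrable I (fun x => (f x ^+ 2)%:E + (g x ^+ 2)%:E)%E.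
  by apply: integrableD => //; exact: inL2_sqr_integrable.
apply: le_integrable dom => //.
  by apply/measurable_EFinP; exact: measurable_funM Lf.1 Lg.1.
move=> x _ /=; rewrite ?abse_EFin lee_fin (@ger0_norm _ (_ + _)) ?addr_ge0 ?sqr_ge0 //.
by rewrite ler_norml; apply/andP; split; nra.
Qed.

Lemma inL2D {f g} : L2 f -> L2 g -> L2 (fun x => f x + g x).
Proof.
move=> Lf Lg; have mfg := measurable_funD Lf.1 Lg.1.
apply: sqr_integrable_inL2 => //.
have dom : mu.-integrable I (fun x => 2%:E * ((f x ^+ 2)%:E + (g x ^+ 2)%:E))%E.
  by apply/integrableZl/integrableD => //; exact: inL2_sqr_integrable.
apply: le_integrable dom => //; first by apply/measurable_EFinP; exact: measurable_funM.
move=> x _ /=; rewrite ?abse_EFin lee_fin.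
rewrite (@ger0_norm _ (_ ^+ 2)) ?sqr_ge0 //.
rewrite (@ger0_norm _ (2 * _)) ?mulr_ge0 ?addr_ge0 ?sqr_ge0 //.
by have := sqr_ge0 (f x - g x); nra.
Qed.

Lemma inL2Z c {f} : L2 f -> L2 (fun x => c * f x).
Proof.
move=> Lf; have mcf := measurable_funM (measurable_cst c) Lf.1.
apply: sqr_integrable_inL2 => //.
have dom : mu.-integrable I (fun x => (c ^+ 2)%:E * (f x ^+ 2)%:E)%E.
  by apply: integrableZl => //; exact: inL2_sqr_integrable.
apply: le_integrable dom => //.
  by apply/measurable_EFinP; exact: measurable_funM.
by move=> x _ /=; rewrite ?abse_EFin lee_fin exprMn.
Qed.

Lemma inL20 : L2 (fun _ => 0).
Proof.
split=> //; under eq_integral => x _ do rewrite expr0n /=.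
by rewrite integral0.
Qed.

Lemma inL2_sum (T : eqType) (r : seq T) (c : T -> R) (F : T -> R -> R) :
  (forall i, i \in r -> L2 (F i)) -> L2 (fun x => \sum_(i <- r) c i * F i x).
Proof.
elim: r => [|i r IHr] LF.
  by under [X in L2 X]funext => x do rewrite big_nil; exact: inL20.
under [X in L2 X]funext => x do rewrite big_cons.
apply: inL2D; first by apply/inL2Z/LF; rewrite mem_head.
by apply: IHr => j jr; apply: LF; rewrite in_cons jr orbT.
Qed.

Lemma ipC f g : ip a b f g = ip a b g f.
Proof. by rewrite /ip; congr fine; apply: eq_integral => x _; rewrite mulrC. Qed.

Lemma ip_suml (T : eqType) (r : seq T) (c : T -> R) (F : T -> R -> R) h :
  (forall i, i \in r -> L2 (F i)) -> L2 h ->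
  ip a b (fun x => \sum_(i <- r) c i * F i x) h = \sum_(i <- r) c i * ip a b (F i) h.
Proof.
move=> + Lh; elim: r => [|i r IHr] LF.
  rewrite big_nil /ip (eq_integral (fun=> 0%E)) ?integral0 // => x _.
  by rewrite big_nil mul0r.
have Li : L2 (F i) by apply: LF; rewrite mem_head.
have Lr j : j \in r -> L2 (F j) by move=> jr; apply: LF; rewrite in_cons jr orbT.
rewrite big_cons -IHr // -RintegralZl //; last exact: inL2_mul_integrable.
rewrite -RintegralD //; first last.
- exact: inL2_mul_integrable (inL2_sum _ _ c _ Lr) Lh.
- have -> : (fun x => c i * (F i x * h x)) = (fun x => c i * F i x * h x).
    by apply/funext => x; rewrite mulrA.
  exact: inL2_mul_integrable (inL2Z _ Li) Lh.
by rewrite /Rintegral; congr fine; apply: eq_integral => x _; rewrite big_cons mulrDl mulrA.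
Qed.

Lemma ip_sum2 (S T : eqType) (r : seq S) (s : seq T) (c : S -> R) (d : T -> R)
    (F : S -> R -> R) (H : T -> R -> R) :
  (forall i, i \in r -> L2 (F i)) -> (forall j, j \in s -> L2 (H j)) ->
  ip a b (fun x => \sum_(i <- r) c i * F i x) (fun x => \sum_(j <- s) d j * H j x) =
  \sum_(i <- r) \sum_(j <- s) c i * d j * ip a b (F i) (H j).
Proof.
move=> LF LH; rewrite ip_suml //; last exact: inL2_sum.
apply: eq_big_seq => i ri; have Li := LF i ri.
rewrite ipC ip_suml // mulr_sumr.
by apply: eq_bigr => j _; rewrite ipC mulrA.
Qed.

Lemma ip_eq_ae {f g h} : L2 f -> L2 g -> L2 h ->
  {ae mu, forall x, x \in `[a, b] -> g x = h x} -> ip a b f g = ip a b f h.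
Proof.
move=> Lf Lg Lh gh; rewrite /ip; congr fine.
apply: ae_eq_integral => //; [apply/measurable_EFinP; exact: measurable_funM Lf.1 Lg.1|
  apply/measurable_EFinP; exact: measurable_funM Lf.1 Lh.1|].
move: gh; apply: filterS; first exact: (ae_filter_ringOfSetsType mu).
by move=> x gh Ix; rewrite gh.
Qed.

Lemma ipr0 f : ip a b f (fun _ => 0) = 0.
Proof.
rewrite /ip (eq_integral (fun=> 0%E)) ?integral0 // => x _.
by rewrite mulr0.
Qed.

End L2.

Section FiniteRank.
Context {R : realType} {a b : R} {n p : nat} {Y : nat -> R -> R}.
Hypothesis LY : forall j, (1 <= j <= n)%N -> inL2 a b (Y j).
Local Notation mu := (@lebesgue_measure R).
Local Notation L2 := (inL2 a b).
Local Notation N := (n - p)%N.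
Local Notation Yc := (Yc n Y).
Local Notation G := (Gmx a b n p Y).

Definition Ycrow (u : R) : 'rV[R]_N := \row_t Yc t.+1 u.

Definition Ycip (g : R -> R) : 'cV[R]_N := \col_t ip a b (Yc t.+1) g.

Definition Kcoef : 'M[R]_N := N%:R ^- 2 *: \sum_(1 <= k < p.+1) G k.

Lemma inL2_Ybar : L2 (Ybar n Y).
Proof.
rewrite (_ : Ybar n Y = fun u => n%:R^-1 * \sum_(j <- index_iota 1 n.+1) 1 * Y j u).
  apply/inL2Z/inL2_sum => j; rewrite mem_index_iota ltnS; exact: LY.
by apply/funext => u; under eq_bigr do rewrite mul1r.
Qed.

Lemma inL2_Yc j : (1 <= j <= n)%N -> L2 (Yc j).
Proof.
move=> jn; rewrite (_ : Yc j = fun u => Y j u + (-1) * Ybar n Y u).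
  by apply: inL2D; [exact: LY|exact: inL2Z inL2_Ybar].
by apply/funext => u; rewrite mulN1r.
Qed.

Lemma inL2_Yc_ord (t : 'I_N) : L2 (Yc t.+1).
Proof. by apply: inL2_Yc; have := ltn_ord t; lia. Qed.

Lemma inL2_Yc_shift k (t : 'I_N) : (k <= p)%N -> L2 (Yc (t.+1 + k)).
Proof. by move=> kp; apply: inL2_Yc; have := ltn_ord t; lia. Qed.

Lemma Mhat_expand k u :
  Mhat n p Y k u = fun z => \sum_(t < N) (N%:R^-1 * Yc t.+1 u) * Yc (t.+1 + k) z.
Proof.
apply/funext => z; rewrite /Mhat big_add1 /= big_mkord mulr_sumr.
by apply: eq_bigr => t _; rewrite mulrA.
Qed.

Lemma ip_Mhat k u v : (k <= p)%N ->
  ip a b (Mhat n p Y k u) (Mhat n p Y k v) =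
  N%:R ^- 2 * (Ycrow u *m G k *m (Ycrow v)^T) 0 0.
Proof.
move=> kp; rewrite !Mhat_expand ip_sum2; try by move=> t _; exact: inL2_Yc_shift.
rewrite mxE mulr_sumr exchange_big /=; apply: eq_bigr => t _.
rewrite !mxE big_distrl mulr_sumr /=; apply: eq_bigr => s _.
by rewrite !mxE -exprVn expr2; ring.
Qed.

Lemma Khat_expand u :
  Khat a b n p Y u = fun v => \sum_(t < N) (Ycrow u *m Kcoef) 0 t * Yc t.+1 v.
Proof.
apply/funext => v; transitivity ((Ycrow u *m Kcoef *m (Ycrow v)^T) 0 0).
  rewrite /Khat /Kcoef -scalemxAr -scalemxAl mulmx_sumr mulmx_suml mxE summxE mulr_sumr.
  by apply: eq_big_nat => k /andP[_ kp]; rewrite ip_Mhat.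
by rewrite mxE; apply: eq_bigr => t _; rewrite !mxE.
Qed.

Lemma Kop_expand g u : L2 g -> Kop a b n p Y g u = (Ycrow u *m Kcoef *m Ycip g) 0 0.
Proof.
move=> Lg; rewrite /Kop Khat_expand ip_suml //; last by move=> t _; exact: inL2_Yc_ord.
by rewrite mxE; apply: eq_bigr => t _; rewrite [Ycip _ _ _]mxE.
Qed.

Lemma Kstar_factor : Kstar a b n p Y = Kcoef *m G 0.
Proof. by rewrite /Kstar /Kcoef -scalemxAl mulmx_suml. Qed.

Lemma psihatE gamma u : psihat n p Y gamma u = (Ycrow u *m gamma) 0 0.
Proof. by rewrite mxE; apply: eq_bigr => t _; rewrite mxE mulrC. Qed.

Lemma inL2_psihat gamma : L2 (psihat n p Y gamma).
Proof. by apply: inL2_sum => t _; exact: inL2_Yc_ord. Qed.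

Lemma Ycip_psihat gamma : Ycip (psihat n p Y gamma) = G 0 *m gamma.
Proof.
apply/matrixP => s z; rewrite (ord1 z) !mxE ipC ip_suml; last 2 first.
- by move=> t _; exact: inL2_Yc_ord.
- exact: inL2_Yc_ord.
by apply: eq_bigr => t _; rewrite !mxE !addn0 ipC mulrC.
Qed.

Lemma Kop_psihat {theta gamma} : Kstar a b n p Y *m gamma = theta *: gamma ->
  forall u, Kop a b n p Y (psihat n p Y gamma) u = theta * psihat n p Y gamma u.
Proof.
move=> Kgamma u; rewrite Kop_expand; last exact: inL2_psihat.
rewrite Ycip_psihat -mulmxA (mulmxA Kcoef).
by rewrite -Kstar_factor Kgamma -scalemxAr mxE psihatE.
Qed.

Lemma psihat_not_L2zero {theta gamma} : theta != 0 -> gamma != 0 ->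
  Kstar a b n p Y *m gamma = theta *: gamma -> ~ L2zero a b (psihat n p Y gamma).
Proof.
move=> theta0 gamma0 Kgamma psi0.
have G0gamma : G 0 *m gamma = 0.
  rewrite -Ycip_psihat; apply/matrixP => s z; rewrite !mxE.
  by rewrite (ip_eq_ae (inL2_Yc_ord s) (inL2_psihat gamma) inL20 psi0) ipr0.
move: Kgamma; rewrite Kstar_factor -mulmxA G0gamma mulmx0 => /esym/eqP.
by rewrite scaler_eq0 (negbTE theta0) (negbTE gamma0).
Qed.

Lemma Kop_eigenvector {theta} : theta != 0 -> Kop_eigenvalue a b n p Y theta ->
  exists2 gamma : 'cV_N, Kstar a b n p Y *m gamma = theta *: gamma & gamma != 0.
Proof.
move=> theta0 [g [Lg [g_nz Kg]]].
pose gamma := theta^-1 *: (Kcoef *m Ycip g).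
have g_psihat : {ae mu, forall u, u \in `[a, b] -> g u = psihat n p Y gamma u}.
  move: Kg; apply: filterS; first exact: (ae_filter_ringOfSetsType mu).
  move=> u Kgu /Kgu; rewrite psihatE -scalemxAr mxE mulmxA -Kop_expand // => ->.
  by rewrite mulrA mulVf // mul1r.
have Ycip_g : Ycip g = G 0 *m gamma.
  rewrite -Ycip_psihat; apply/matrixP => s z; rewrite !mxE.
  exact: ip_eq_ae (inL2_Yc_ord s) Lg (inL2_psihat gamma) g_psihat.
exists gamma.
  by rewrite Kstar_factor -mulmxA -Ycip_g scalerA mulfV // scale1r.
apply/eqP => gamma0; apply: g_nz; move: g_psihat; apply: filterS.
  exact: (ae_filter_ringOfSetsType mu).
by move=> u gu /gu ->; rewrite psihatE gamma0 mulmx0 mxE.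
Qed.

End FiniteRank.

Theorem proposition2 (R : realType) (a b : R) (n p : nat) (Y : nat -> R -> R) :
  a < b -> (1 <= p)%N -> (p < n)%N ->
  (forall j, (1 <= j <= n)%N -> inL2 a b (Y j)) ->
  (forall theta : R, theta != 0 ->
     (Kop_eigenvalue a b n p Y theta <-> eigenvalue (Kstar a b n p Y) theta)) /\
  (forall (theta : R) (gamma : 'cV[R]_(n - p)),
     theta != 0 -> gamma != 0 -> Kstar a b n p Y *m gamma = theta *: gamma ->
     inL2 a b (psihat n p Y gamma) /\ ~ L2zero a b (psihat n p Y gamma) /\
     (forall u, u \in `[a, b] ->
        Kop a b n p Y (psihat n p Y gamma) u = theta * psihat n p Y gamma u)).
Proof.
move=> _ _ _ LY; split=> [theta theta0|theta gamma theta0 gamma0 Kgamma].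
  split=> [Keig|/eigenvalue_colP[gamma Kgamma gamma0]].
    by apply/eigenvalue_colP; apply: (Kop_eigenvector LY theta0 Keig).
  exists (psihat n p Y gamma); split; first exact: inL2_psihat.
  split; first exact: (psihat_not_L2zero LY theta0 gamma0 Kgamma).
  by apply: nearW => u _; exact: (Kop_psihat LY Kgamma u).
split; first exact: inL2_psihat.
split; first exact: (psihat_not_L2zero LY theta0 gamma0 Kgamma).
by move=> u _; exact: (Kop_psihat LY Kgamma u).
Qed.
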